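(* (1) The sets $\Gamma$ and $\Gamma^\circ$ are positive invariant. (2) For every $x\in\mathbb{R}^2$, $\Gamma^\circ\subset L(x)$.
   Context: Fix $\alpha>\beta>0$. For $i\in\{0,1\}$ let $\Phi_i^t(x_1,x_2)=(i+(x_1-i)e^{-\alpha t},\, i+(x_2-i)e^{-\beta t})$, $t\in\mathbb{R}$, be the flow of the vector field $u_i(x_1,x_2)=(-\alpha(x_1-i),-\beta(x_2-i))$. For $n\ge1$, $(t_1,\dots,t_n)\in(0,\infty)^n$ and $i\in\{0,1\}$, let $\Phi_i^{(t_1,\dots,t_n)}=\Phi_i^{t_n}\circ\Phi_{1-i}^{t_{n-1}}\circ\Phi_i^{t_{n-2}}\circ\cdots$ (composition of $n$ flows with alternating indices, the last one applied being $\Phi_i^{t_n}$). A point $x$ is reachable from $y$ if $x=\Phi_i^{(t_1,\dots,t_n)}(y)$ for some $i\in\{0,1\}$, $n\in\mathbb{N}$ and $(t_1,\dots,t_n)\in(0,\infty)^n$; $L(y)$ is the set of points reachable from $y$. A nonempty set $S\subset\mathbb{R}^2$ is positive invariant if $L(y)\subset S$ for all $y\in S$ (equivalently $\Phi_i^t(x)\in S$ for all $i$, $t\ge0$, $x\in S$). Let $\Gamma=\{(x_1,x_2): 0\le x_2\le1,\ x_2^{\alpha/\beta}\le x_1\le 1-(1-x_2)^{\alpha/\beta}\}$ and $\Gamma^\circ$ its interior. *)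

From Stdlib Require Import Reals List.
Open Scope R_scope.

Definition pt := (R * R)%type.

(* real power x^p for x >= 0 and p > 0, with 0^p = 0 (Rpower alone gives 0^p = 1) *)
Definition rpow (x p : R) : R := if Rle_dec x 0 then 0 else Rpower x p.

Definition idx (i : bool) : R := if i then 1 else 0.

Definition Phi (alpha beta : R) (i : bool) (t : R) (x : pt) : pt :=
  (idx i + (fst x - idx i) * exp (- alpha * t),
   idx i + (snd x - idx i) * exp (- beta * t)).

(* rflow i [t_n; t_{n-1}; ...; t_1] y = Phi_i^{t_n} (Phi_{1-i}^{t_{n-1}} (... y)) *)
Fixpoint rflow (alpha beta : R) (i : bool) (ts : list R) (y : pt) : pt :=
  match ts with
  | nil => y
  | t :: rest => Phi alpha beta i t (rflow alpha beta (negb i) rest y)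
  end.

Definition multiflow (alpha beta : R) (i : bool) (ts : list R) (y : pt) : pt :=
  rflow alpha beta i (rev ts) y.

Definition reachable (alpha beta : R) (y x : pt) : Prop :=
  exists (i : bool) (ts : list R),
    ts <> nil /\ Forall (fun t => 0 < t) ts /\ x = multiflow alpha beta i ts y.

Definition L (alpha beta : R) (y : pt) : pt -> Prop := reachable alpha beta y.

Definition pos_invariant (alpha beta : R) (S : pt -> Prop) : Prop :=
  (exists x, S x) /\ forall y, S y -> forall x, L alpha beta y x -> S x.

Definition Gamma (alpha beta : R) (x : pt) : Prop :=
  0 <= snd x <= 1 /\
  rpow (snd x) (alpha / beta) <= fst x <= 1 - rpow (1 - snd x) (alpha / beta).

Definition interior2 (S : pt -> Prop) (x : pt) : Prop :=
  exists eps, 0 < eps /\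
    forall y : pt, sqrt ((fst y - fst x)^2 + (snd y - snd x)^2) < eps -> S y.

Definition Gamma_int (alpha beta : R) : pt -> Prop := interior2 (Gamma alpha beta).

(* Write p = alpha / beta > 1.  The reflection x |-> (1, 1) - x exchanges the two flows and
   preserves Gamma, so it is enough to follow Phi_0^t x = (F^p x1, F x2) with F = exp (- beta t).
   The lower boundary x1 = x2^p of Gamma is mapped into itself, and the upper one is pushed
   inwards by the convexity of u |-> u^p: (1 - F x2)^p <= (1 - F) + F (1 - x2)^p.  The interior
   is preserved because every Phi_i^t is a homeomorphism with a Lipschitz inverse.
   For reachability, first flow with Phi_1 until x is close to the sink (1, 1).  From there the
   Phi_0-orbit passes to the left of z, while the Phi_1-orbit through z, followed backwards
   towards x2 = 0, leaves the half-plane x1 >= 0 because 1 - z1 > (1 - z2)^p; by the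
   intermediate value theorem the two orbits cross, and x reaches z along Phi_1, Phi_0, Phi_1. *)

From Stdlib Require Import Reals List Lra Psatz.
From Coquelicot Require Import Coquelicot.
Open Scope R_scope.

Lemma exp_le_1 x : x <= 0 -> exp x <= 1.
Proof.
  intros [Hx|Hx]; [left; rewrite <- exp_0; apply exp_increasing; lra|].
  rewrite Hx, exp_0. lra.
Qed.

Lemma Rpower_base_1 p : Rpower 1 p = 1.
Proof. unfold Rpower. rewrite ln_1, Rmult_0_r. apply exp_0. Qed.

Lemma Rpower_exp u p : Rpower (exp u) p = exp (p * u).
Proof. unfold Rpower. rewrite ln_exp. reflexivity. Qed.

Lemma Rpower_pos x p : 0 < Rpower x p.
Proof. apply exp_pos. Qed.

Lemma Rpower_root x p : 0 < x -> 0 < p -> Rpower (Rpower x (/ p)) p = x.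
Proof. intros. rewrite Rpower_mult, Rinv_l by lra. apply Rpower_1; lra. Qed.

Lemma Rpower_le_1 x p : 0 <= p -> 0 < x <= 1 -> Rpower x p <= 1.
Proof. intros. rewrite <- (Rpower_base_1 p). apply Rle_Rpower_l; lra. Qed.

Lemma Rpower_le_base x p : 1 <= p -> 0 < x <= 1 -> Rpower x p <= x.
Proof.
  intros Hp Hx. replace p with (1 + (p - 1)) by ring.
  rewrite Rpower_plus, Rpower_1 by lra.
  pose proof (Rpower_le_1 x (p - 1) ltac:(lra) Hx). nra.
Qed.

Lemma Rpower_bernoulli p r : 1 <= p -> 0 < r -> 1 + p * (r - 1) <= Rpower r p.
Proof.
  intros Hp Hr.
  set (f := fun u => Rpower u p - p * u).
  assert (Hf : forall c, 0 < c -> derivable_pt_lim f c (p * (Rpower c (p - 1) - 1))).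
  { intros c Hc. replace (p * (Rpower c (p - 1) - 1)) with (p * Rpower c (p - 1) - p * 1) by ring.
    apply derivable_pt_lim_minus; [apply derivable_pt_lim_power; lra|].
    apply derivable_pt_lim_scal, derivable_pt_lim_id. }
  assert (Hsign : forall c, 0 < c -> 0 <= (Rpower c (p - 1) - 1) * (c - 1)).
  { intros c Hc. pose proof (Rpower_base_1 (p - 1)).
    destruct (Rle_dec c 1).
    - assert (Rpower c (p - 1) <= Rpower 1 (p - 1)) by (apply Rle_Rpower_l; lra). nra.
    - assert (Rpower 1 (p - 1) <= Rpower c (p - 1)) by (apply Rle_Rpower_l; lra). nra. }
  assert (Hf1 : f 1 = 1 - p) by (unfold f; rewrite Rpower_base_1; ring).
  enough (f 1 <= f r) by (unfold f in *; lra).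
  destruct (Rtotal_order r 1) as [Hlt|[->|Hgt]]; [| lra |].
  - destruct (MVT_cor2 f _ r 1 Hlt (fun c Hc => Hf c (Rlt_le_trans _ _ _ Hr (proj1 Hc))))
      as [c [Hc1 [Hrc Hc]]].
    specialize (Hsign c ltac:(lra)).
    assert (Rpower c (p - 1) - 1 <= 0) by nra.
    assert (0 <= p * (1 - Rpower c (p - 1)) * (1 - r))
      by (apply Rmult_le_pos; [apply Rmult_le_pos|]; lra).
    lra.
  - destruct (MVT_cor2 f _ 1 r Hgt (fun c Hc => Hf c (Rlt_le_trans _ _ _ Rlt_0_1 (proj1 Hc))))
      as [c [Hc1 [Hc Hcr]]].
    specialize (Hsign c ltac:(lra)).
    assert (0 <= Rpower c (p - 1) - 1) by nra.
    assert (0 <= p * (Rpower c (p - 1) - 1) * (r - 1))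
      by (apply Rmult_le_pos; [apply Rmult_le_pos|]; lra).
    lra.
Qed.

Lemma rpow_Rpower x p : 0 < x -> rpow x p = Rpower x p.
Proof. intros. unfold rpow. destruct (Rle_dec x 0); [lra|reflexivity]. Qed.

Lemma rpow_nonpos x p : x <= 0 -> rpow x p = 0.
Proof. intros. unfold rpow. destruct (Rle_dec x 0); [reflexivity|lra]. Qed.

Lemma rpow_ge0 x p : 0 <= rpow x p.
Proof. unfold rpow. destruct (Rle_dec x 0); [lra|]. left; apply Rpower_pos. Qed.

Lemma rpow_1 p : rpow 1 p = 1.
Proof. rewrite rpow_Rpower by lra. apply Rpower_base_1. Qed.

Lemma rpow_mult x y p : 0 <= x -> 0 <= y -> rpow (x * y) p = rpow x p * rpow y p.
Proof.
  intros [Hx|<-] [Hy|<-]; try (rewrite ?Rmult_0_l, ?Rmult_0_r, rpow_nonpos by lra; ring).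
  rewrite !rpow_Rpower by nra. symmetry. apply Rpower_mult_distr; lra.
Qed.

Lemma rpow_bernoulli p r : 1 <= p -> 0 <= r -> 1 + p * (r - 1) <= rpow r p.
Proof.
  intros Hp [Hr|<-].
  - rewrite rpow_Rpower by lra. apply Rpower_bernoulli; lra.
  - rewrite rpow_nonpos by lra. lra.
Qed.

Lemma rpow_convex p l x y : 1 <= p -> 0 <= l <= 1 -> 0 <= x -> 0 <= y ->
  rpow (l * x + (1 - l) * y) p <= l * rpow x p + (1 - l) * rpow y p.
Proof.
  intros Hp Hl Hx Hy. pose proof (rpow_ge0 x p). pose proof (rpow_ge0 y p).
  set (m := l * x + (1 - l) * y).
  destruct (Rle_dec m 0). { rewrite rpow_nonpos by lra. nra. }
  (* the tangent line of [rpow _ p] at [m], i.e. Bernoulli at [u / m] *)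
  assert (Htangent : forall u, 0 <= u -> rpow m p * (1 + p * (u / m - 1)) <= rpow u p).
  { intros u Hu. replace u with (u / m * m) at 2 by (field; lra).
    rewrite rpow_mult by (unfold Rdiv; try apply Rmult_le_pos; try apply Rlt_le, Rinv_0_lt_compat; lra).
    rewrite Rmult_comm. apply Rmult_le_compat_r; [apply rpow_ge0|].
    apply rpow_bernoulli; [lra|]. apply Rdiv_le_0_compat; lra. }
  pose proof (Htangent x Hx) as Tx. pose proof (Htangent y Hy) as Ty.
  assert (Hsum : l * (1 + p * (x / m - 1)) + (1 - l) * (1 + p * (y / m - 1)) = 1)
    by (unfold m in *; field; lra).
  assert (rpow m p = l * (rpow m p * (1 + p * (x / m - 1)))
                     + (1 - l) * (rpow m p * (1 + p * (y / m - 1)))).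
  { transitivity (rpow m p * 1); [ring|]. rewrite <- Hsum at 1. ring. }
  nra.
Qed.

Definition edist (x y : pt) : R := sqrt ((fst y - fst x) ^ 2 + (snd y - snd x) ^ 2).

Lemma Rabs_fst_le_edist x y : Rabs (fst y - fst x) <= edist x y.
Proof.
  unfold edist. rewrite <- (sqrt_pow2 (Rabs _)) by apply Rabs_pos. apply sqrt_le_1_alt.
  rewrite pow2_abs. pose proof (pow2_ge_0 (snd y - snd x)). lra.
Qed.

Lemma Rabs_snd_le_edist x y : Rabs (snd y - snd x) <= edist x y.
Proof.
  unfold edist. rewrite <- (sqrt_pow2 (Rabs _)) by apply Rabs_pos. apply sqrt_le_1_alt.
  rewrite pow2_abs. pose proof (pow2_ge_0 (fst y - fst x)). lra.
Qed.

Lemma edist_fst_shift a b h : edist (a, b) (a + h, b) = Rabs h.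
Proof.
  unfold edist; cbn [fst snd]. replace ((a + h - a) ^ 2 + (b - b) ^ 2) with (Rabs h ^ 2)
    by (rewrite pow2_abs; ring). apply sqrt_pow2, Rabs_pos.
Qed.

Lemma edist_snd_shift a b h : edist (a, b) (a, b + h) = Rabs h.
Proof.
  unfold edist; cbn [fst snd]. replace ((a - a) ^ 2 + (b + h - b) ^ 2) with (Rabs h ^ 2)
    by (rewrite pow2_abs; ring). apply sqrt_pow2, Rabs_pos.
Qed.

Lemma interior2_subset S x : interior2 S x -> S x.
Proof.
  intros [eps [Heps Hball]]. apply Hball.
  rewrite !Rminus_diag, pow_i, Rplus_0_l, sqrt_0 by lia. exact Heps.
Qed.

Lemma interior2_image (S : pt -> Prop) (f g : pt -> pt) c z : 0 < c ->
  (forall y, S y -> S (f y)) -> (forall y, f (g y) = y) -> g (f z) = z ->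
  (forall y y', edist (g y) (g y') <= c * edist y y') ->
  interior2 S z -> interior2 S (f z).
Proof.
  intros Hc HfS Hfg Hgf Hg [eps [Heps Hball]].
  exists (eps / c). split; [apply Rdiv_lt_0_compat; lra|].
  intros y Hy. rewrite <- (Hfg y). apply HfS, Hball.
  fold (edist z (g y)). rewrite <- Hgf at 1.
  apply (Rle_lt_trans _ _ _ (Hg _ _)).
  fold (edist (f z) y) in Hy. apply (Rmult_lt_compat_l c) in Hy; [|lra].
  replace (c * (eps / c)) with eps in Hy by (field; lra). exact Hy.
Qed.

Lemma pos_invariant_of_Phi alpha beta (S : pt -> Prop) :
  (exists x, S x) -> (forall i t y, 0 < t -> S y -> S (Phi alpha beta i t y)) ->
  pos_invariant alpha beta S.
Proof.
  intros Hne HS. split; [exact Hne|]. intros y Hy x [i [ts [_ [Hts ->]]]].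
  unfold multiflow. apply Forall_rev in Hts. revert i.
  induction Hts as [|t ts' Ht _ IH]; intros i; [exact Hy|]. apply HS; auto.
Qed.

Lemma Phi_add alpha beta i s t y :
  Phi alpha beta i s (Phi alpha beta i t y) = Phi alpha beta i (s + t) y.
Proof.
  unfold Phi; cbn [fst snd].
  replace (- alpha * (s + t)) with (- alpha * t + - alpha * s) by ring.
  replace (- beta * (s + t)) with (- beta * t + - beta * s) by ring.
  rewrite !exp_plus. f_equal; ring.
Qed.

Lemma Phi_opp alpha beta i t y : Phi alpha beta i t (Phi alpha beta i (- t) y) = y.
Proof.
  rewrite Phi_add, Rplus_opp_r. unfold Phi. rewrite !Rmult_0_r, exp_0.
  destruct y; cbn [fst snd]. f_equal; ring.
Qed.

Definition flip (x : pt) : pt := (1 - fst x, 1 - snd x).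

Lemma Phi_true_flip alpha beta t x :
  Phi alpha beta true t x = flip (Phi alpha beta false t (flip x)).
Proof. unfold Phi, flip, idx; cbn [fst snd]. f_equal; ring. Qed.

Lemma Gamma_flip alpha beta x : Gamma alpha beta x -> Gamma alpha beta (flip x).
Proof. unfold Gamma, flip; cbn [fst snd]. replace (1 - (1 - snd x)) with (snd x) by ring. lra. Qed.

Section Flows.

Variables alpha beta : R.
Hypothesis Hbeta : 0 < beta.
Hypothesis Hab : beta < alpha.

Local Notation p := (alpha / beta).

Lemma rate_ratio_gt1 : 1 < p.
Proof. apply (Rmult_lt_reg_r beta); [lra|]. field_simplify; lra. Qed.

Lemma exp_alpha_rpow t : exp (- alpha * t) = rpow (exp (- beta * t)) p.
Proof.
  rewrite rpow_Rpower, Rpower_exp by apply exp_pos. f_equal. field. lra.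
Qed.

Lemma Gamma_Phi_false t x : 0 <= t -> Gamma alpha beta x -> Gamma alpha beta (Phi alpha beta false t x).
Proof.
  intros Ht. pose proof rate_ratio_gt1. destruct x as [x1 x2]. unfold Gamma, Phi, idx; cbn [fst snd].
  rewrite exp_alpha_rpow, !Rplus_0_l, !Rminus_0_r.
  set (F := exp (- beta * t)).
  assert (HF : 0 < F <= 1) by (split; [apply exp_pos|apply exp_le_1; nra]).
  assert (HE : rpow F p <= F).
  { rewrite rpow_Rpower by lra. apply Rpower_le_base; lra. }
  intros [[H1 H2] [H3 H4]].
  pose proof (rpow_ge0 x2 p). pose proof (rpow_ge0 F p). pose proof (rpow_ge0 (1 - x2) p).
  pose proof (rpow_convex p F (1 - x2) 1 ltac:(lra) ltac:(lra) ltac:(lra) ltac:(lra)) as Hconv.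
  rewrite rpow_1 in Hconv. replace (F * (1 - x2) + (1 - F) * 1) with (1 - x2 * F) in Hconv by ring.
  rewrite rpow_mult by lra.
  split; [split; nra|split; nra].
Qed.

Lemma Gamma_Phi i t x : 0 <= t -> Gamma alpha beta x -> Gamma alpha beta (Phi alpha beta i t x).
Proof.
  intros Ht Hx. destruct i.
  - rewrite Phi_true_flip. apply Gamma_flip, Gamma_Phi_false, Gamma_flip; assumption.
  - apply Gamma_Phi_false; assumption.
Qed.

Lemma edist_Phi_le i t y z : t <= 0 ->
  edist (Phi alpha beta i t y) (Phi alpha beta i t z) <= exp (- alpha * t) * edist y z.
Proof.
  intros Ht. unfold edist, Phi; cbn [fst snd].
  set (A := exp (- alpha * t)). set (B := exp (- beta * t)).
  assert (HBA : 0 < B <= A).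
  { split; [apply exp_pos|]. destruct (Req_dec t 0) as [->|].
    - unfold A, B. rewrite !Rmult_0_r. lra.
    - left. apply exp_increasing. nra. }
  set (D := (fst z - fst y) ^ 2 + (snd z - snd y) ^ 2).
  assert (HD : 0 <= D)
    by (unfold D; pose proof (pow2_ge_0 (fst z - fst y)); pose proof (pow2_ge_0 (snd z - snd y)); lra).
  replace (A * sqrt D) with (sqrt (A ^ 2 * D))
    by (rewrite sqrt_mult, sqrt_pow2 by (try apply pow2_ge_0; lra); reflexivity).
  apply sqrt_le_1_alt. unfold D.
  replace (idx i + (fst z - idx i) * A - (idx i + (fst y - idx i) * A))
    with ((fst z - fst y) * A) by ring.
  replace (idx i + (snd z - idx i) * B - (idx i + (snd y - idx i) * B))
    with ((snd z - snd y) * B) by ring.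
  assert (B ^ 2 <= A ^ 2) by nra. pose proof (pow2_ge_0 (snd z - snd y)). nra.
Qed.

Lemma Gamma_int_Phi i t z : 0 <= t ->
  Gamma_int alpha beta z -> Gamma_int alpha beta (Phi alpha beta i t z).
Proof.
  intros Ht. apply (interior2_image _ _ (Phi alpha beta i (- t)) (exp (alpha * t))).
  - apply exp_pos.
  - intros y. apply Gamma_Phi, Ht.
  - intros y. apply Phi_opp.
  - rewrite <- (Ropp_involutive t) at 2. apply Phi_opp.
  - intros y y'. replace (alpha * t) with (- alpha * - t) by ring. apply edist_Phi_le. lra.
Qed.

Lemma rpow_le_mul y q : 0 < y <= q -> rpow y p <= y * Rpower q (p - 1).
Proof.
  intros Hy. pose proof rate_ratio_gt1. rewrite rpow_Rpower by lra.
  replace p with (1 + (p - 1)) at 1 by ring. rewrite Rpower_plus, Rpower_1 by lra.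
  apply Rmult_le_compat_l; [lra|]. apply Rle_Rpower_l; lra.
Qed.

Lemma Gamma_int_half : Gamma_int alpha beta (1 / 2, 1 / 2).
Proof.
  set (c := Rpower (3 / 4) (p - 1)).
  assert (Hc : 0 < c < 1).
  { split; [apply Rpower_pos|]. rewrite <- (Rpower_base_1 (p - 1)).
    apply Rlt_Rpower_l; [pose proof rate_ratio_gt1|]; lra. }
  exists ((1 - c) / 8). split; [lra|]. intros y Hy. fold (edist (1 / 2, 1 / 2) y) in Hy.
  pose proof (Rle_lt_trans _ _ _ (Rabs_fst_le_edist (1 / 2, 1 / 2) y) Hy) as H1.
  pose proof (Rle_lt_trans _ _ _ (Rabs_snd_le_edist (1 / 2, 1 / 2) y) Hy) as H2.
  cbn [fst snd] in H1, H2.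
  apply Rabs_def2 in H1. apply Rabs_def2 in H2.
  pose proof (rpow_le_mul (snd y) (3 / 4) ltac:(lra)) as R1.
  pose proof (rpow_le_mul (1 - snd y) (3 / 4) ltac:(lra)) as R2.
  fold c in R1, R2. unfold Gamma. split; [lra|]. split; nra.
Qed.

Lemma Gamma_int_strict z : Gamma_int alpha beta z ->
  0 < snd z < 1 /\ rpow (snd z) p < fst z < 1 - rpow (1 - snd z) p.
Proof.
  destruct z as [z1 z2]. intros [eps [Heps Hball]]. cbn [fst snd].
  assert (Hfst : forall h, Rabs h < eps -> Gamma alpha beta (z1 + h, z2)).
  { intros h Hh. apply Hball. fold (edist (z1, z2) (z1 + h, z2)). rewrite edist_fst_shift. exact Hh. }
  assert (Hsnd : forall h, Rabs h < eps -> Gamma alpha beta (z1, z2 + h)).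
  { intros h Hh. apply Hball. fold (edist (z1, z2) (z1, z2 + h)). rewrite edist_snd_shift. exact Hh. }
  assert (Hhalf : Rabs (eps / 2) < eps /\ Rabs (- (eps / 2)) < eps)
    by (rewrite Rabs_Ropp, Rabs_right; lra).
  destruct Hhalf as [Hpos Hneg].
  pose proof (Hfst _ Hpos). pose proof (Hfst _ Hneg).
  pose proof (Hsnd _ Hpos). pose proof (Hsnd _ Hneg).
  unfold Gamma in *; cbn [fst snd] in *. lra.
Qed.

Lemma flow_time_pos l : 0 < l < 1 -> 0 < - ln l / beta.
Proof.
  intros Hl. apply Rdiv_lt_0_compat; [|lra].
  assert (ln l < ln 1) by (apply ln_increasing; lra). rewrite ln_1 in *. lra.
Qed.

Lemma Phi_ratio i l x : 0 < l ->
  Phi alpha beta i (- ln l / beta) x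
  = (idx i + (fst x - idx i) * Rpower l p, idx i + (snd x - idx i) * l).
Proof.
  intros Hl. unfold Phi, Rpower.
  replace (- beta * (- ln l / beta)) with (ln l) by (field; lra).
  replace (- alpha * (- ln l / beta)) with (p * ln l) by (field; lra).
  rewrite exp_ln by exact Hl. reflexivity.
Qed.

Lemma Phi_true_near_sink x d : 0 < d -> exists s, 0 < s /\
  Rabs (fst (Phi alpha beta true s x) - 1) < d /\ Rabs (snd (Phi alpha beta true s x) - 1) < d.
Proof.
  intros Hd. pose proof rate_ratio_gt1.
  set (A := 1 + Rabs (fst x - 1) + Rabs (snd x - 1)).
  assert (HA : 1 <= A)
    by (unfold A; pose proof (Rabs_pos (fst x - 1)); pose proof (Rabs_pos (snd x - 1)); lra).
  set (l := Rmin (1 / 2) (d / A)).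
  assert (Hl : 0 < l < 1).
  { split; [apply Rmin_glb_lt; [lra|apply Rdiv_lt_0_compat; lra]|].
    apply (Rle_lt_trans _ (1 / 2)); [apply Rmin_l|lra]. }
  assert (HAl : A * l <= d).
  { replace d with (A * (d / A)) by (field; lra). apply Rmult_le_compat_l; [lra|apply Rmin_r]. }
  assert (Hlp : 0 < Rpower l p <= l) by (split; [apply Rpower_pos|apply Rpower_le_base; lra]).
  exists (- ln l / beta). split; [apply flow_time_pos; exact Hl|].
  rewrite Phi_ratio by lra. unfold idx; cbn [fst snd].
  replace (1 + (fst x - 1) * Rpower l p - 1) with ((fst x - 1) * Rpower l p) by ring.
  replace (1 + (snd x - 1) * l - 1) with ((snd x - 1) * l) by ring.
  rewrite !Rabs_mult, (Rabs_right (Rpower l p)), (Rabs_right l) by lra.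
  pose proof (Rabs_pos (fst x - 1)). pose proof (Rabs_pos (snd x - 1)).
  unfold A in HAl. split; nra.
Qed.

(* The [Phi false]-orbit of [(w1, w2)] is [u |-> (w1 (u / w2) ^ p, u)]; the conclusion says that
   the [Phi true]-orbit of its point at height [u] passes through [(z1, z2)]. *)
Lemma orbits_cross w1 w2 z1 z2 : 0 < w1 -> 0 < z2 < 1 -> z2 < w2 ->
  w1 * Rpower (z2 / w2) p < z1 -> z1 < 1 - Rpower (1 - z2) p ->
  exists u, 0 < u < z2 /\
    1 + (w1 * Rpower (u / w2) p - 1) * Rpower ((1 - z2) / (1 - u)) p = z1.
Proof.
  intros Hw1 Hz2 Hw2 Hlow Hup. pose proof rate_ratio_gt1.
  pose proof (Rpower_pos (z2 / w2) p). pose proof (Rpower_pos (1 - z2) p).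
  set (g := fun u => z1 - (1 + (w1 * Rpower (u / w2) p - 1) * Rpower ((1 - z2) / (1 - u)) p)).
  assert (Hz1 : 0 < z1 < 1) by nra.
  (* [u0] is chosen so that [((1 - z2) / (1 - u0)) ^ p < 1 - z1] *)
  set (r := Rpower (1 - z1) (/ p)).
  assert (Hrp : Rpower r p = 1 - z1) by (apply Rpower_root; lra).
  assert (Hr1 : r <= 1) by (apply Rpower_le_1; [apply Rlt_le, Rinv_0_lt_compat|]; lra).
  assert (Hr : 1 - z2 < r).
  { destruct (Rlt_or_le (1 - z2) r) as [|Hle]; [assumption|].
    assert (Rpower r p <= Rpower (1 - z2) p) by (apply Rle_Rpower_l; [|split; [apply Rpower_pos|]]; lra).
    lra. }
  assert (Hr0 : 0 < r) by apply Rpower_pos.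
  set (q := (1 - z2) / r).
  assert (Hqr : q * r = 1 - z2) by (unfold q; field; lra).
  assert (Hq : 1 - z2 <= q < 1) by (split; nra).
  set (u0 := (1 - q) / 2).
  assert (Hu0 : 0 < u0 < z2) by (unfold u0; lra).
  assert (Hgu0 : g u0 < 0).
  { assert (Hratio : (1 - z2) / (1 - u0) < r).
    { apply (Rmult_lt_reg_r (1 - u0)); [lra|].
      replace ((1 - z2) / (1 - u0) * (1 - u0)) with (1 - z2) by (field; lra).
      unfold u0. nra. }
    assert (Rpower ((1 - z2) / (1 - u0)) p < 1 - z1).
    { rewrite <- Hrp. apply Rlt_Rpower_l; [lra|]. split; [apply Rdiv_lt_0_compat|]; lra. }
    assert (0 < w1 * Rpower (u0 / w2) p * Rpower ((1 - z2) / (1 - u0)) p)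
      by (apply Rmult_lt_0_compat; [apply Rmult_lt_0_compat|]; [lra|apply Rpower_pos..]).
    unfold g. lra. }
  assert (Hgz2 : 0 < g z2).
  { unfold g. replace ((1 - z2) / (1 - z2)) with 1 by (field; lra). rewrite Rpower_base_1. lra. }
  assert (Hcont : forall a, u0 <= a <= z2 -> continuity_pt g a).
  { intros a Ha. apply continuity_pt_filterlim, (ex_derive_continuous g).
    unfold g, Rpower. auto_derive.
    repeat split; try apply Rmult_lt_0_compat; try apply Rinv_0_lt_compat; lra. }
  destruct (Ranalysis5.IVT_interv g u0 z2 Hcont ltac:(lra) Hgu0 Hgz2) as [u [Hu Hgu]].
  exists u. split.
  - split; [lra|]. destruct (Req_dec u z2) as [->|]; lra.
  - unfold g in Hgu. lra.
Qed.

Lemma two_phase_reach w z : 0 < fst w -> 0 < snd z < 1 -> snd z < snd w ->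
  fst w * Rpower (snd z / snd w) p < fst z -> fst z < 1 - Rpower (1 - snd z) p ->
  exists t s, 0 < t /\ 0 < s /\ z = Phi alpha beta true s (Phi alpha beta false t w).
Proof.
  destruct w as [w1 w2], z as [z1 z2]; cbn [fst snd]. intros Hw1 Hz2 Hw2 Hlow Hup.
  destruct (orbits_cross w1 w2 z1 z2 Hw1 Hz2 Hw2 Hlow Hup) as [u [Hu Hcross]].
  assert (Hl : 0 < u / w2 < 1).
  { split; [apply Rdiv_lt_0_compat; lra|]. apply (Rmult_lt_reg_r w2); [lra|].
    field_simplify; lra. }
  assert (Hm : 0 < (1 - z2) / (1 - u) < 1).
  { split; [apply Rdiv_lt_0_compat; lra|]. apply (Rmult_lt_reg_r (1 - u)); [lra|].
    field_simplify; lra. }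
  exists (- ln (u / w2) / beta), (- ln ((1 - z2) / (1 - u)) / beta).
  split; [apply flow_time_pos, Hl|]. split; [apply flow_time_pos, Hm|].
  rewrite !Phi_ratio by lra. unfold idx; cbn [fst snd]. f_equal.
  - rewrite <- Hcross at 1. ring.
  - field. lra.
Qed.

Lemma reach_interior x z : 0 < snd z < 1 -> rpow (snd z) p < fst z < 1 - rpow (1 - snd z) p ->
  exists s t s', 0 < s /\ 0 < t /\ 0 < s' /\
    z = Phi alpha beta true s' (Phi alpha beta false t (Phi alpha beta true s x)).
Proof.
  destruct z as [z1 z2]; cbn [fst snd]. intros Hz2 Hz1. pose proof rate_ratio_gt1.
  rewrite !rpow_Rpower in Hz1 by lra.
  set (a := Rpower z2 p) in *. assert (Ha : 0 < a) by apply Rpower_pos.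
  set (d := Rmin (1 - z2) ((z1 - a) / (a + p * z1))).
  assert (Hd : 0 < d) by (apply Rmin_glb_lt; [|apply Rdiv_lt_0_compat]; nra).
  assert (Hdz : d <= 1 - z2) by apply Rmin_l.
  assert (Hda : d * (a + p * z1) <= z1 - a).
  { replace (z1 - a) with ((z1 - a) / (a + p * z1) * (a + p * z1)) by (field; nra).
    apply Rmult_le_compat_r; [nra|apply Rmin_r]. }
  destruct (Phi_true_near_sink x d Hd) as [s [Hs [Hw1 Hw2]]].
  set (w := Phi alpha beta true s x) in *.
  apply Rabs_def2 in Hw1. apply Rabs_def2 in Hw2.
  (* by Bernoulli, [snd w ^ p] is close to 1, so the [Phi false]-orbit of [w] passes left of [z] *)
  assert (Hbern : 1 + p * (snd w - 1) <= Rpower (snd w) p) by (apply Rpower_bernoulli; lra).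
  assert (Hsplit : Rpower (z2 / snd w) p * Rpower (snd w) p = a).
  { unfold a. rewrite Rpower_mult_distr by (try apply Rdiv_lt_0_compat; lra).
    f_equal. field. lra. }
  assert (Hlow : fst w * Rpower (z2 / snd w) p < z1).
  { pose proof (Rpower_pos (z2 / snd w) p). pose proof (Rpower_pos (snd w) p).
    apply (Rmult_lt_reg_r (Rpower (snd w) p)); [assumption|].
    rewrite Rmult_assoc, Hsplit.
    assert (HW : 1 - p * d < Rpower (snd w) p) by nra.
    assert (fst w * a < (1 + d) * a) by nra.
    assert (z1 * (1 - p * d) < z1 * Rpower (snd w) p) by nra.
    nra. }
  destruct (two_phase_reach w (z1, z2)) as [t [s' [Ht [Hs' Hz]]]]; cbn [fst snd]; try lra.
  exists s, t, s'. auto.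
Qed.

End Flows.

Theorem lemma4p1 (alpha beta : R) (Hbeta : 0 < beta) (Hab : beta < alpha) :
  (pos_invariant alpha beta (Gamma alpha beta) /\
   pos_invariant alpha beta (Gamma_int alpha beta)) /\
  (forall x : pt, forall z : pt, Gamma_int alpha beta z -> L alpha beta x z).
Proof.
  pose proof (Gamma_int_half alpha beta Hbeta Hab) as Hhalf.
  split; [split|].
  - apply pos_invariant_of_Phi.
    + exists (1 / 2, 1 / 2). apply interior2_subset, Hhalf.
    + intros i t y Ht. apply Gamma_Phi; lra.
  - apply pos_invariant_of_Phi.
    + exists (1 / 2, 1 / 2). exact Hhalf.
    + intros i t y Ht. apply Gamma_int_Phi; lra.
  - intros x z Hz.
    destruct (Gamma_int_strict alpha beta z Hz) as [Hz2 Hz1].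
    destruct (reach_interior alpha beta Hbeta Hab x z Hz2 Hz1) as [s [t [s' [Hs [Ht [Hs' ->]]]]]].
    exists true, (s :: t :: s' :: nil). repeat split.
    + discriminate.
    + repeat constructor; assumption.
Qed.
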